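(* Let $S$ be a rectangular domain and $\ell,\ell'\in C(S)$. Then $\ell'\succeq\ell$ if and only if every vertex of $\ell'$ belongs to $A(\ell)$, where $$A(\ell)=\bigcup_{(t_*,x_* )\text{ vertex of }\ell}\{(t,x)\in\tilde{\mathbb{Z}}^2: t\ge t_*+|x-x_*|\}.$$
   Context: Lattice and domains. $\tilde{\mathbb{Z}}^2=\{(t,x)\in\mathbb{Z}^2:t+x\text{ even}\}$; edges join points at Euclidean distance $\sqrt2$. A rectangular domain is a nonempty set $S=\{(t,x)\in\tilde{\mathbb{Z}}^2: a\le t+x\le b,\ c\le t-x\le d\}$ with even integers $a\le b$, $c\le d$. $\bar S$ is $S$ together with all points joined by an edge to a point of $S$; $\partial\bar S=\bar S\setminus S$; $\mathbb{E}(\bar S)$ is the set of edges with an endpoint in $S$. Broken traces. A broken trace is $\ell=(y_0,e_1,y_1,\dots,e_n,y_n)$, $n\ge1$, with $y_i=(t_i,x_i)\in\tilde{\mathbb{Z}}^2$, $e_i=\langle y_{i-1},y_i\rangle$, $x_i=x_{i-1}+1$, $t_i-t_{i-1}\in\{-1,1\}$. Its vertices are $y_0,\dots,y_n$. - $D(\ell)=\{x_0,\dots,x_n\}$, and $t_\ell(x)$ is the $t$-coordinate of the vertex of $\ell$ with second coordinate $x$. - $\ell\subseteq\bar S$ means $y_0,y_n\in\bar S$, $y_1,\dots,y_{n-1}\in S$, all $e_i\in\mathbb{E}(\bar S)$. - $C(S)$ is the set of $\ell\subseteq\bar S$ with $y_0,y_n\in\partial\bar S$. Order. $\ell'\succeq\ell$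 means that $t_{\ell'}(x)\ge t_\ell(x)$ for all $x\in D(\ell)\cap D(\ell')$, and that $t_{\ell'}(x')\ge t_\ell(x)$ for some $x'\in D(\ell')$, $x\in D(\ell)$. *)

From Stdlib Require Import ZArith List.
Import ListNotations.
Open Scope Z_scope.

(* A point (t,x) of Z^2; it is in the lattice Z~^2 iff t + x is even. *)
Definition pt := (Z * Z)%type.
Definition in_lattice (p : pt) : Prop := Z.even (fst p + snd p) = true.

(* Edges join lattice points at Euclidean distance sqrt 2. *)
Definition adjacent (p q : pt) : Prop :=
  in_lattice p /\ in_lattice q /\
  Z.abs (fst p - fst q) = 1 /\ Z.abs (snd p - snd q) = 1.

Definition in_S (a b c d : Z) (p : pt) : Prop :=
  in_lattice p /\
  a <= fst p + snd p <= b /\ c <= fst p - snd p <= d.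

Definition is_rect_domain (a b c d : Z) : Prop :=
  Z.even a = true /\ Z.even b = true /\ Z.even c = true /\ Z.even d = true /\
  a <= b /\ c <= d /\ (exists p, in_S a b c d p).

Definition in_Sbar (a b c d : Z) (p : pt) : Prop :=
  in_S a b c d p \/ (exists q, in_S a b c d q /\ adjacent p q).

Definition in_dSbar (a b c d : Z) (p : pt) : Prop :=
  in_Sbar a b c d p /\ ~ in_S a b c d p.

Definition edge_in_ESbar (a b c d : Z) (p q : pt) : Prop :=
  adjacent p q /\ (in_S a b c d p \/ in_S a b c d q).

(* A broken trace l = (y_0, e_1, y_1, ..., e_n, y_n) is represented by its
   first vertex y_0 (tr_start) and the list [y_1; ...; y_n] (tr_rest). *)
Record trace := mkTrace { tr_start : pt; tr_rest : list pt }.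

Definition vertices (l : trace) : list pt := tr_start l :: tr_rest l.
Definition last_vertex (l : trace) : pt := last (tr_rest l) (tr_start l).
Definition interior_vertices (l : trace) : list pt := removelast (tr_rest l).

Fixpoint consec (R : pt -> pt -> Prop) (p : pt) (l : list pt) : Prop :=
  match l with
  | [] => True
  | q :: l' => R p q /\ consec R q l'
  end.

Definition trace_step (p q : pt) : Prop :=
  snd q = snd p + 1 /\ (fst q - fst p = 1 \/ fst q - fst p = -1).

Definition is_broken_trace (l : trace) : Prop :=
  in_lattice (tr_start l) /\ tr_rest l <> [] /\
  consec trace_step (tr_start l) (tr_rest l).

Definition trace_in_Sbar (a b c d : Z) (l : trace) : Prop :=
  in_Sbar a b c d (tr_start l) /\ in_Sbar a b c d (last_vertex l) /\
  (forall y, In y (interior_vertices l) -> in_S a b c d y) /\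
  consec (edge_in_ESbar a b c d) (tr_start l) (tr_rest l).

Definition in_C (a b c d : Z) (l : trace) : Prop :=
  is_broken_trace l /\ trace_in_Sbar a b c d l /\
  in_dSbar a b c d (tr_start l) /\ in_dSbar a b c d (last_vertex l).

(* l' ⪰ l.  Since a broken trace has exactly one vertex with given second
   coordinate x, t_l(x) is the t-coordinate of the vertex (t,x) of l. *)
Definition trace_ge (l' l : trace) : Prop :=
  (forall t x t', In (t, x) (vertices l) -> In (t', x) (vertices l') -> t' >= t) /\
  (exists t' x' t x, In (t', x') (vertices l') /\ In (t, x) (vertices l) /\ t' >= t).

Definition in_A (l : trace) (p : pt) : Prop :=
  in_lattice p /\
  exists ts xs, In (ts, xs) (vertices l) /\ fst p >= ts + Z.abs (snd p - xs).

(* We work in the light-cone coordinates u = t + x and v = t - x, in which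
   S is the box [a,b] x [c,d].  A step of a broken trace raises u by 2 or
   lowers v by 2, so along a trace u is nondecreasing and v nonincreasing in
   x (the trace is 1-Lipschitz).  A trace in C(S) enters through one of the
   "left" sides u = a-2 or v = d+2 and leaves through one of the "right"
   sides u = b+2 or v = c-2; everything in between lies in S.

   The direction A(l) -> ⪰ only uses the Lipschitz property.  For ⪰ -> A(l)
   a vertex of l' above the x-range of l is handled by the exit side of l:
   if l leaves through v = c-2, the vertex is in the cone of the exit point;
   if l leaves through u = b+2, then l' cannot extend to the right of l at
   all (overlapping traces would push l' out of S, disjoint ones would lie
   strictly below l).  The left end follows by the mirror symmetry x -> -x,
   which maps crossings of S to crossings of the mirrored rectangle. *)

From Stdlib Require Import ZArith List Lia.
Import ListNotations.
Open Scope Z_scope.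

Definition lc_plus (p : pt) : Z := fst p + snd p.
Definition lc_minus (p : pt) : Z := fst p - snd p.

Ltac cone_lia := unfold lc_plus, lc_minus in *; cbn [fst snd] in *; lia.

Definition cone_monotone (V : pt -> Prop) : Prop :=
  forall p q, V p -> V q -> snd p <= snd q ->
    lc_plus p <= lc_plus q /\ lc_minus q <= lc_minus p.

Definition dominates (V' V : pt -> Prop) : Prop :=
  (forall t x t', V (t, x) -> V' (t', x) -> t' >= t) /\
  (exists t' x' t x, V' (t', x') /\ V (t, x) /\ t' >= t).

Definition in_future_of (V : pt -> Prop) (y : pt) : Prop :=
  exists ts xs, V (ts, xs) /\ fst y >= ts + Z.abs (snd y - xs).

Lemma step_lattice {p q} : trace_step p q -> in_lattice p -> in_lattice q.
Proof.
  unfold trace_step, in_lattice; rewrite !Z.even_spec.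
  intros [Hx [Ht | Ht]] [k Hk]; [exists (k + 1) | exists k]; lia.
Qed.

Lemma chain_lattice {p l} :
  consec trace_step p l -> in_lattice p -> forall r, In r (p :: l) -> in_lattice r.
Proof.
  revert p; induction l as [|q l IH]; intros p Hsteps Hp r Hr.
  - destruct Hr as [<- | []]; exact Hp.
  - destruct Hsteps as [Hpq Hsteps]; destruct Hr as [<- | Hr]; [exact Hp |].
    exact (IH q Hsteps (step_lattice Hpq Hp) r Hr).
Qed.

Lemma chain_forward {p l} : consec trace_step p l -> forall q, In q l ->
  snd p < snd q /\ lc_plus p <= lc_plus q /\ lc_minus q <= lc_minus p.
Proof.
  revert p; induction l as [|r l IH]; intros p Hsteps q Hq; [destruct Hq |].
  destruct Hsteps as [[Hx Ht] Hsteps]; destruct Hq as [<- | Hq]; [cone_lia |].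
  destruct (IH r Hsteps q Hq); cone_lia.
Qed.

Lemma chain_monotone {p l} :
  consec trace_step p l -> cone_monotone (fun r => In r (p :: l)).
Proof.
  revert p; induction l as [|r l IH]; intros p Hsteps q1 q2 H1 H2 Hle.
  - destruct H1 as [<- | []]; destruct H2 as [<- | []]; lia.
  - pose proof (chain_forward Hsteps) as Hfwd.
    destruct Hsteps as [_ Hsteps].
    destruct H1 as [<- | H1]; destruct H2 as [<- | H2].
    + lia.
    + destruct (Hfwd q2 H2); lia.
    + destruct (Hfwd q1 H1); lia.
    + exact (IH r Hsteps q1 q2 H1 H2 Hle).
Qed.

Lemma chain_span {p mid q} : consec trace_step p (mid ++ [q]) ->
  snd p < snd q /\ forall r, In r (p :: mid ++ [q]) -> snd p <= snd r <= snd q.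
Proof.
  revert p; induction mid as [|m mid IH]; intros p Hsteps.
  - destruct Hsteps as [[Hx _] _].
    split; [lia | intros r [<- | [<- | []]]; lia].
  - destruct Hsteps as [[Hx _] Hsteps]; destruct (IH m Hsteps) as [Hlt Hr].
    split; [lia |]; intros r [<- | Hin]; [lia |]; specialize (Hr r Hin); lia.
Qed.

Lemma chain_covers {p mid q} : consec trace_step p (mid ++ [q]) ->
  forall x, snd p <= x <= snd q -> exists t, In (t, x) (p :: mid ++ [q]).
Proof.
  revert p; induction mid as [|m mid IH]; intros p Hsteps x Hx.
  - destruct Hsteps as [[Hq _] _].
    destruct (Z.eq_dec x (snd p)) as [-> | Hne].
    + exists (fst p); left; apply surjective_pairing.
    + exists (fst q); right; left.
      replace x with (snd q) by lia; apply surjective_pairing.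
  - destruct Hsteps as [[Hm _] Hsteps].
    destruct (Z.eq_dec x (snd p)) as [-> | Hne].
    + exists (fst p); left; apply surjective_pairing.
    + destruct (IH m Hsteps x) as [t Ht]; [lia | exists t; right; exact Ht].
Qed.

Lemma last_cons (r d : pt) (l : list pt) : last (r :: l) d = last l r.
Proof.
  revert r d; induction l as [|s l IH]; intros r d; [reflexivity |].
  change (last (s :: l) d = last (s :: l) r); rewrite !IH; reflexivity.
Qed.

Lemma consec_head {R : pt -> pt -> Prop} {p l q} :
  consec R p (l ++ [q]) -> R p (hd q l).
Proof. destruct l; simpl; tauto. Qed.

Lemma consec_snoc {R : pt -> pt -> Prop} {p l q} :
  consec R p (l ++ [q]) -> R (last l p) q.
Proof.
  revert p; induction l as [|r l IH]; intros p H; [exact (proj1 H) |].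
  rewrite last_cons; exact (IH r (proj2 H)).
Qed.

Record crossing (a b c d : Z) (s e : pt) (V : pt -> Prop) : Prop := {
  cross_start : V s;
  cross_end : V e;
  cross_nontrivial : snd s < snd e;
  cross_span : forall p, V p -> snd s <= snd p <= snd e;
  cross_covers : forall x, snd s <= x <= snd e -> exists t, V (t, x);
  cross_monotone : cone_monotone V;
  cross_box : forall p, V p ->
    a - 2 <= lc_plus p <= b + 2 /\ c - 2 <= lc_minus p <= d + 2;
  cross_before_exit : forall p, V p -> snd p < snd e ->
    lc_plus p <= b /\ c <= lc_minus p;
  cross_after_entry : forall p, V p -> snd s < snd p ->
    a <= lc_plus p /\ lc_minus p <= d;
  cross_entry : lc_plus s = a - 2 \/ lc_minus s = d + 2;
  cross_exit : lc_plus e = b + 2 \/ lc_minus e = c - 2 }.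

Arguments cross_start {a b c d s e V}.
Arguments cross_end {a b c d s e V}.
Arguments cross_nontrivial {a b c d s e V}.
Arguments cross_span {a b c d s e V}.
Arguments cross_covers {a b c d s e V}.
Arguments cross_monotone {a b c d s e V}.
Arguments cross_box {a b c d s e V}.
Arguments cross_before_exit {a b c d s e V}.
Arguments cross_after_entry {a b c d s e V}.
Arguments cross_entry {a b c d s e V}.
Arguments cross_exit {a b c d s e V}.

(* A step from outside S into S starts on a left side of the enlarged box;
   the parity of the lattice and of a, d rules out intermediate values. *)
Lemma entry_step {a b c d p q} : is_rect_domain a b c d ->
  in_lattice p -> ~ in_S a b c d p -> in_S a b c d q -> trace_step p q ->
  a - 2 <= lc_plus p <= b /\ c <= lc_minus p <= d + 2 /\
  (lc_plus p = a - 2 \/ lc_minus p = d + 2).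
Proof.
  intros [Ea [_ [_ [Ed _]]]] Hp Hout [_ Hq] Hstep.
  assert (Hout' : ~ (a <= fst p + snd p <= b /\ c <= fst p - snd p <= d))
    by (intro; apply Hout; unfold in_S; tauto).
  unfold in_lattice, trace_step in *.
  apply Z.even_spec in Ea, Ed, Hp; destruct Ea, Ed, Hp; cone_lia.
Qed.

Lemma exit_step {a b c d p q} : is_rect_domain a b c d ->
  in_lattice q -> ~ in_S a b c d q -> in_S a b c d p -> trace_step p q ->
  a <= lc_plus q <= b + 2 /\ c - 2 <= lc_minus q <= d /\
  (lc_plus q = b + 2 \/ lc_minus q = c - 2).
Proof.
  intros [_ [Eb [Ec _]]] Hq Hout [_ Hp] Hstep.
  assert (Hout' : ~ (a <= fst q + snd q <= b /\ c <= fst q - snd q <= d))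
    by (intro; apply Hout; unfold in_S; tauto).
  unfold in_lattice, trace_step in *.
  apply Z.even_spec in Eb, Ec, Hq; destruct Eb, Ec, Hq; cone_lia.
Qed.

Lemma crossing_of_in_C {a b c d l} : is_rect_domain a b c d -> in_C a b c d l ->
  crossing a b c d (tr_start l) (last_vertex l) (fun p => In p (vertices l)).
Proof.
  destruct l as [y0 rest]; unfold in_C, is_broken_trace, trace_in_Sbar, in_dSbar.
  unfold vertices, last_vertex, interior_vertices; simpl.
  intros hS [[Hlat [Hne Hsteps]] [[_ [_ [Hint Hedges]]] [[_ Hout0] [_ Hout1]]]].
  destruct (exists_last Hne) as [mid [yn ->]].
  rewrite last_last in *; rewrite removelast_last in Hint.
  assert (Hentry : a - 2 <= lc_plus y0 <= b /\ c <= lc_minus y0 <= d + 2 /\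
                   (lc_plus y0 = a - 2 \/ lc_minus y0 = d + 2)).
  { destruct (consec_head Hedges) as [_ [Hy0 | Hnext]]; [contradiction |].
    exact (entry_step hS Hlat Hout0 Hnext (consec_head Hsteps)). }
  pose proof (chain_lattice Hsteps Hlat) as Hlats.
  assert (Hend : In yn (y0 :: mid ++ [yn]))
    by (right; apply in_or_app; right; left; reflexivity).
  assert (Hexit : a <= lc_plus yn <= b + 2 /\ c - 2 <= lc_minus yn <= d /\
                  (lc_plus yn = b + 2 \/ lc_minus yn = c - 2)).
  { destruct (consec_snoc Hedges) as [_ [Hprev | Hyn]]; [| contradiction].
    exact (exit_step hS (Hlats yn Hend) Hout1 Hprev (consec_snoc Hsteps)). }
  destruct (chain_span Hsteps) as [Hlt Hspan].
  assert (Hwhere : forall q, In q (y0 :: mid ++ [yn]) ->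
            q = y0 \/ in_S a b c d q \/ q = yn).
  { intros q [<- | Hq]; [auto |].
    destruct (in_app_or _ _ _ Hq) as [Hm | [<- | []]]; auto. }
  constructor.
  - left; reflexivity.
  - exact Hend.
  - exact Hlt.
  - exact Hspan.
  - exact (chain_covers Hsteps).
  - exact (chain_monotone Hsteps).
  - intros q Hq; destruct (Hwhere q Hq) as [-> | [[_ HS] | ->]]; cone_lia.
  - intros q Hq Hx; destruct (Hwhere q Hq) as [-> | [[_ HS] | ->]]; cone_lia.
  - intros q Hq Hx; destruct (Hwhere q Hq) as [-> | [[_ HS] | ->]]; cone_lia.
  - tauto.
  - tauto.
Qed.

Definition mirror (p : pt) : pt := (fst p, - snd p).

Lemma mirror_involutive (p : pt) : mirror (mirror p) = p.
Proof. destruct p as [t x]; unfold mirror; simpl; rewrite Z.opp_involutive; reflexivity. Qed.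

Ltac mirror_lia := unfold mirror in *; cone_lia.

(* Mirroring reverses a crossing and swaps the roles of u and v, hence of
   the pairs (a,b) and (c,d). *)
Lemma crossing_mirror {a b c d s e V} : crossing a b c d s e V ->
  crossing c d a b (mirror e) (mirror s) (fun p => V (mirror p)).
Proof.
  intros C; constructor; rewrite ?mirror_involutive.
  - exact (cross_end C).
  - exact (cross_start C).
  - pose proof (cross_nontrivial C); mirror_lia.
  - intros p Hp; pose proof (cross_span C _ Hp); mirror_lia.
  - intros x Hx; destruct (cross_covers C (- x)) as [t Ht];
      [mirror_lia | exists t; exact Ht].
  - intros p q Hp Hq Hle.
    pose proof (cross_monotone C _ _ Hq Hp); mirror_lia.
  - intros p Hp; pose proof (cross_box C _ Hp); mirror_lia.
  - intros p Hp Hx; pose proof (cross_after_entry C _ Hp); mirror_lia.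
  - intros p Hp Hx; pose proof (cross_before_exit C _ Hp); mirror_lia.
  - pose proof (cross_exit C); mirror_lia.
  - pose proof (cross_entry C); mirror_lia.
Qed.

Lemma dominates_mirror {V' V} :
  dominates V' V -> dominates (fun p => V' (mirror p)) (fun p => V (mirror p)).
Proof.
  intros [Hpt [t' [x' [t [x [H' [H Hge]]]]]]]; split.
  - intros s y s' Hs Hs'; exact (Hpt s (- y) s' Hs Hs').
  - exists t', (- x'), t, (- x); unfold mirror; simpl; rewrite !Z.opp_involutive; auto.
Qed.

Section TwoCrossings.

Context {a b c d : Z} {s e s' e' : pt} {V V' : pt -> Prop}.
Hypothesis (C : crossing a b c d s e V) (C' : crossing a b c d s' e' V').

(* If V leaves through the side u = b+2 and V' starts to the right of that
   exit, then V' lies strictly below V: V' must enter through u = a-2, and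
   its t-coordinates are then bounded by those of V. *)
Lemma below_future_exit : lc_plus e = b + 2 -> snd e < snd s' ->
  forall p' p, V' p' -> V p -> fst p' < fst p.
Proof.
  intros Hexit Hright p' p Hp' Hp.
  pose proof (cross_before_exit C' s' (cross_start C') (cross_nontrivial C')).
  pose proof (cross_after_entry C e (cross_end C) (cross_nontrivial C)).
  pose proof (cross_span C p Hp).
  pose proof (cross_span C' p' Hp').
  pose proof (cross_monotone C p e Hp (cross_end C)).
  pose proof (cross_monotone C' s' p' (cross_start C') Hp').
  pose proof (cross_box C p Hp).
  pose proof (cross_box C' p' Hp').
  destruct (cross_entry C'); cone_lia.
Qed.

Hypothesis (Hdom : dominates V' V).

Lemma future_exit_confines : lc_plus e = b + 2 -> forall y, V' y -> snd y <= snd e.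
Proof.
  destruct Hdom as [Hpt [t' [x' [t [x [H' [H Hge]]]]]]].
  intros Hexit y Hy; apply Z.nlt_ge; intro Hbeyond.
  destruct (Z_lt_le_dec (snd e) (snd s')) as [Hdisj | Hover].
  - pose proof (below_future_exit Hexit Hdisj _ _ H' H); cbn [fst] in *; lia.
  - pose proof (cross_span C' y Hy).
    destruct (cross_covers C' (snd e)) as [te Hte]; [lia |].
    assert (te >= fst e).
    { apply (Hpt (fst e) (snd e) te); [| exact Hte].
      rewrite <- surjective_pairing; exact (cross_end C). }
    pose proof (cross_before_exit C' _ Hte); cone_lia.
Qed.

Lemma beyond_exit : forall y, V' y -> snd e < snd y ->
  fst y >= fst e + (snd y - snd e).
Proof.
  intros y Hy Hx; destruct (cross_exit C) as [Hexit | Hexit].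
  - pose proof (future_exit_confines Hexit y Hy); lia.
  - pose proof (cross_box C' y Hy); cone_lia.
Qed.

End TwoCrossings.

(* Vertices of V' to the left of V lie in the forward cone of its entry;
   this is [beyond_exit] for the mirrored crossings. *)
Lemma before_entry {a b c d s e s' e' V V'} :
  crossing a b c d s e V -> crossing a b c d s' e' V' -> dominates V' V ->
  forall y, V' y -> snd y < snd s -> fst y >= fst s + (snd s - snd y).
Proof.
  intros C C' Hdom y Hy Hx.
  assert (Hy' : V' (mirror (mirror y))) by (rewrite mirror_involutive; exact Hy).
  pose proof (beyond_exit (crossing_mirror C) (crossing_mirror C')
                (dominates_mirror Hdom) (mirror y) Hy') as Hm.
  unfold mirror in Hm; cbn [fst snd] in Hm; lia.
Qed.

Lemma dominates_in_future {a b c d s e s' e' V V'} :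
  crossing a b c d s e V -> crossing a b c d s' e' V' -> dominates V' V ->
  forall y, V' y -> in_future_of V y.
Proof.
  intros C C' Hdom y Hy.
  destruct (Z_lt_le_dec (snd y) (snd s)) as [Hleft | Hge].
  - exists (fst s), (snd s); rewrite <- surjective_pairing.
    split; [exact (cross_start C) |].
    pose proof (before_entry C C' Hdom y Hy Hleft); lia.
  - destruct (Z_lt_le_dec (snd e) (snd y)) as [Hright | Hle].
    + exists (fst e), (snd e); rewrite <- surjective_pairing.
      split; [exact (cross_end C) |].
      pose proof (beyond_exit C C' Hdom y Hy Hright); lia.
    + destruct (cross_covers C (snd y)) as [t Ht]; [lia |].
      exists t, (snd y); split; [exact Ht |].
      destruct Hdom as [Hpt _].
      assert (Habove : fst y >= t).
      { apply (Hpt t (snd y) (fst y) Ht); rewrite <- surjective_pairing; exact Hy. }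
      lia.
Qed.

(* Conversely, a nonempty set lying in the forward cones of a 1-Lipschitz
   set V dominates V: the cone of (ts,xs) lies above V at every x. *)
Lemma in_future_dominates {V V' : pt -> Prop} {y0 : pt} :
  cone_monotone V -> V' y0 -> (forall y, V' y -> in_future_of V y) -> dominates V' V.
Proof.
  intros Hmono Hy0 Hcone; split.
  - intros t x t' Ht Ht'.
    destruct (Hcone _ Ht') as [ts [xs [Hs Hge]]]; simpl in Hge.
    destruct (Z_le_gt_dec x xs) as [Hle | Hgt].
    + pose proof (Hmono _ _ Ht Hs Hle); cone_lia.
    + pose proof (Hmono _ _ Hs Ht (Z.lt_le_incl _ _ (Z.gt_lt _ _ Hgt))); cone_lia.
  - destruct (Hcone _ Hy0) as [ts [xs [Hs Hge]]].
    exists (fst y0), (snd y0), ts, xs; rewrite <- surjective_pairing; split; [exact Hy0 |].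
    split; [exact Hs | lia].
Qed.

Theorem mainTheorem7 (a b c d : Z) (hS : is_rect_domain a b c d)
  (l l' : trace) (hl : in_C a b c d l) (hl' : in_C a b c d l') :
  trace_ge l' l <-> (forall y, In y (vertices l') -> in_A l y).
Proof.
  pose proof (crossing_of_in_C hS hl) as C.
  pose proof (crossing_of_in_C hS hl') as C'.
  destruct hl' as [[Hlat' [_ Hsteps']] _].
  split.
  - intros Hge y Hy; split.
    + exact (chain_lattice Hsteps' Hlat' y Hy).
    + exact (dominates_in_future C C' Hge y Hy).
  - intros HA.
    exact (in_future_dominates (cross_monotone C)
             (cross_start C') (fun y Hy => proj2 (HA y Hy))).
Qed.
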